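(* Let $t\ge 3$ and let $\mathcal{A}=\{A_1,\ldots,A_\alpha\}$ be a nontrivial clutter on $E_t=\{1,\ldots,t\}$. Then (i) $\boldsymbol{\gamma}(\mathcal{A}^{\triangledown})=\mathrm{T}^{(+)}_{2^t}-\prod^{\ast}_{i\in[\alpha]}\Bigl(\mathrm{T}^{(+)}_{2^t}-\prod^{\ast}_{a\in A_i}\tfrac12\bigl(\mathrm{T}^{(+)}_{2^t}-\boldsymbol{x}(\boldsymbol{\mathfrak{a}}(a))\cdot\mathbf{M}\bigr)\Bigr)$; (ii) $\boldsymbol{\gamma}(\mathfrak{B}(\mathcal{A})^{\triangledown})=\Bigl(\prod^{\ast}_{i\in[\alpha]}\Bigl(\mathrm{T}^{(+)}_{2^t}-\prod^{\ast}_{a\in A_i}\tfrac12\bigl(\mathrm{T}^{(+)}_{2^t}-\boldsymbol{x}(\boldsymbol{\mathfrak{a}}(a))\cdot\mathbf{M}\bigr)\Bigr)\Bigr)\cdot\overline{\mathbf{U}}(2^t)$.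
   Context: A clutter on $E_t$ is a family of subsets of $E_t$ none of which contains another; nontrivial means neither the empty family nor $\{\emptyset\}$. $\mathcal{C}^{\triangledown}:=\{D\subseteq E_t: D\supseteq C\text{ for some }C\in\mathcal{C}\}$; the blocker $\mathfrak{B}(\mathcal{A})$ is the family of inclusion-minimal sets meeting every member of $\mathcal{A}$. Order the $2^t$ subsets of $E_t$ by increasing cardinality, lexicographically within equal cardinality; $\boldsymbol{\gamma}(\mathcal{F})\in\{0,1\}^{2^t}$ has $k$-th entry $1$ iff the $k$-th subset lies in $\mathcal{F}$; $T_{\mathcal{F}}:=\mathrm{T}^{(+)}_{2^t}-2\boldsymbol{\gamma}(\mathcal{F})$, with $\mathrm{T}^{(+)}_{2^t}$ the all-ones row vector. For $a\in E_t$, $\boldsymbol{\mathfrak{a}}(a):=T_{\{\{a\}\}^{\triangledown}}$ (characteristic tope of the family of all subsets containing $a$). $\mathbf{M}$ is the $2^t\times 2^t$ matrix whose rows are $R^0,\ldots,R^{2^t-1}$, where $R^0:=\mathrm{T}^{(+)}_{2^t}$ and $R^s$ ($1\le s\le 2^t-1$) has entries $-1$ in positions $1,\ldots,s$ and $1$ elsewhere; for $T\in\{1,-1\}^{2^t}$, $\boldsymbol{x}(T):=T\mathbf{M}^{-1}$ (the unique vector with $T=\boldsymbol{x}(T)\mathbf{M}$). $\prod^{\ast}$ is the componentwise product; $\overline{\mathbf{U}}(2^t)$ is the backward identity matrix of order $2^t$ ($(i,j)$ entry $\delta_{i+j,2^t+1}$). *)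

From mathcomp Require Import all_boot all_order all_algebra.
Set Implicit Arguments. Unset Strict Implicit. Unset Printing Implicit Defensive.
Import Order.TTheory GRing.Theory Num.Theory.
Local Open Scope ring_scope.

(* E_t = {1,...,t} is modelled by 'I_t = {0,...,t-1} (order-preserving shift). *)

Fixpoint lexlt (s1 s2 : seq nat) : bool :=
  match s1, s2 with
  | [::], [::] => false
  | [::], _ :: _ => true
  | _ :: _, [::] => false
  | x :: s, y :: s' => (x < y)%N || ((x == y) && lexlt s s')
  end.

Definition elems (t : nat) (A : {set 'I_t}) : seq nat :=
  sort leq [seq val i | i <- enum A].

Definition subset_le (t : nat) (A B : {set 'I_t}) : bool :=
  (#|A| < #|B|)%N || ((#|A| == #|B|) && ~~ lexlt (elems B) (elems A)).

Definition subsets_ordered (t : nat) : seq {set 'I_t} :=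
  sort (@subset_le t) (enum [set: {set 'I_t}]).

Definition kth_subset (t : nat) (k : nat) : {set 'I_t} :=
  nth set0 (subsets_ordered t) k.

Definition Tplus (R : nzRingType) (t : nat) : 'rV[R]_(2 ^ t) := const_mx 1.

Definition gamma (R : nzRingType) (t : nat) (F : {set {set 'I_t}}) : 'rV[R]_(2 ^ t) :=
  \row_(k < 2 ^ t) (kth_subset t k \in F)%:R.

Definition tope (R : nzRingType) (t : nat) (F : {set {set 'I_t}}) : 'rV[R]_(2 ^ t) :=
  Tplus R t - 2%:R *: gamma R F.

Definition upclos (t : nat) (C : {set {set 'I_t}}) : {set {set 'I_t}} :=
  [set D : {set 'I_t} | [exists X in C, X \subset D]].

Definition blocker (t : nat) (A : {set {set 'I_t}}) : {set {set 'I_t}} :=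
  [set B : {set 'I_t} | minset (fun X : {set 'I_t} => [forall C in A, X :&: C != set0]) B].

Definition is_clutter (t : nat) (A : {set {set 'I_t}}) : Prop :=
  forall X Y, X \in A -> Y \in A -> X \subset Y -> X = Y.

Definition nontrivial_clutter (t : nat) (A : {set {set 'I_t}}) : Prop :=
  is_clutter A /\ A != set0 /\ A != [set set0].

Definition frak_a (R : nzRingType) (t : nat) (a : 'I_t) : 'rV[R]_(2 ^ t) :=
  tope R (upclos [set [set a]]).

(* the matrix M: row s has -1 in positions 1..s (1-indexed), 1 elsewhere;
   0-indexed: M i j = -1 iff j < i *)
Definition Mmat (R : nzRingType) (t : nat) : 'M[R]_(2 ^ t) :=
  \matrix_(i < 2 ^ t, j < 2 ^ t) (if (j < i)%N then -1 else 1).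

Definition xvec (R : fieldType) (t : nat) (T : 'rV[R]_(2 ^ t)) : 'rV[R]_(2 ^ t) :=
  T *m invmx (Mmat R t).

(* backward identity matrix: (i,j) entry delta_{i+j, 2^t+1} (1-indexed) *)
Definition Ubar (R : nzRingType) (t : nat) : 'M[R]_(2 ^ t) :=
  \matrix_(i < 2 ^ t, j < 2 ^ t) ((i + j)%N == (2 ^ t).-1)%:R.

Definition cprod (R : comNzRingType) (n : nat) (I : finType) (P : {pred I})
  (F : I -> 'rV[R]_n) : 'rV[R]_n :=
  \row_(k < n) \prod_(i in P) F i 0 k.

Definition Pexpr (R : fieldType) (t : nat) (A : {set {set 'I_t}}) : 'rV[R]_(2 ^ t) :=
  cprod (mem A) (fun Ai : {set 'I_t} =>
    Tplus R t - cprod (mem Ai) (fun a : 'I_t =>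
      (2%:R)^-1 *: (Tplus R t - xvec (frak_a R a) *m Mmat R t))).

From mathcomp Require Import all_boot all_order all_algebra zify.
Import Order.TTheory GRing.Theory Num.Theory.
Set Implicit Arguments. Unset Strict Implicit. Unset Printing Implicit Defensive.

(* Since M is invertible (consecutive rows differ by 2 e_i), x(a(a)) M = a(a),
   so 1/2 (T+ - x(a(a)) M) is the characteristic vector of the family of sets
   containing a.  Componentwise products of 0/1 vectors are characteristic
   vectors of intersections and T+ - gamma(F) is that of the complementary
   family, so the common expression of (i) and (ii) is gamma of the family of
   sets containing no A_i, which is (i).  For (ii), complementation reverses
   the order on subsets: among sets of equal size the lexicographically smaller
   one is the one containing the least element of the symmetric difference.
   Hence multiplying by the backward identity maps gamma(F) to
   gamma {S | E_t \ S in F}, and S meets every A_i iff no A_i lies in E_t \ S. *)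

Lemma lexltnn s : lexlt s s = false.
Proof. by elim: s => //= x s ->; rewrite ltnn eqxx. Qed.

Lemma lexlt_trans : transitive lexlt.
Proof.
move=> b a c; elim: a b c => [|x a IH] [|y b] [|z c] //=.
case/orP=> [xy|/andP[/eqP<- ab]]; case/orP=> [yz|/andP[/eqP<- bc]].
- by rewrite (ltn_trans xy yz).
- by rewrite xy.
- by rewrite yz.
- by rewrite eqxx (IH _ _ ab bc) orbT.
Qed.

Lemma lexlt_total s1 s2 : s1 != s2 -> lexlt s1 s2 || lexlt s2 s1.
Proof.
elim: s1 s2 => [|x s1 IH] [|y s2] //=.
case: (ltngtP x y) => //= <-; rewrite ?eqxx ?ltnn /= => ne; apply: IH.
by apply: contra ne => /eqP ->.
Qed.

Definition first_diff_in (s1 s2 : seq nat) : Prop :=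
  exists m, [/\ m \in s1, m \notin s2 & forall x, x < m -> (x \in s1) = (x \in s2)].

Lemma first_diff_in_asym s1 s2 : first_diff_in s1 s2 -> ~ first_diff_in s2 s1.
Proof.
move=> [m1 [m1a m1b h1]] [m2 [m2b m2a h2]].
case: (ltngtP m1 m2) => [lt12|lt21|eq12].
- by move: (h2 _ lt12); rewrite m1a (negbTE m1b).
- by move: (h1 _ lt21); rewrite m2b (negbTE m2a).
- by rewrite eq12 m2b in m1b.
Qed.

Lemma lexlt_first_diff s1 s2 : sorted ltn s1 -> sorted ltn s2 ->
  size s1 = size s2 -> lexlt s1 s2 -> first_diff_in s1 s2.
Proof.
elim: s1 s2 => [|x s1 IH] [|y s2] //= sorted1 sorted2 [] size12.
have /allP gt1 := order_path_min ltn_trans sorted1.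
have /allP gt2 := order_path_min ltn_trans sorted2.
case/orP=> [xy|/andP[/eqP exy lex12]].
  exists x; split.
  - by rewrite inE eqxx.
  - rewrite inE negb_or neq_ltn xy /=; apply/negP => /gt2.
    by rewrite ltnNge ltnW.
  - move=> z zx; rewrite !inE ltn_eqF // ltn_eqF ?(ltn_trans zx xy) //=.
    apply/idP/idP => [/gt1|/gt2]; first by rewrite ltnNge ltnW.
    by rewrite ltnNge ltnW ?(ltn_trans zx xy).
subst y; have [m [m1 m2 agree]] :=
  IH s2 (path_sorted sorted1) (path_sorted sorted2) size12 lex12.
exists m; split.
- by rewrite inE m1 orbT.
- by rewrite inE negb_or m2 andbT gtn_eqF ?gt1.
- by move=> z zm; rewrite !inE agree.
Qed.

Lemma lexlt_first_diffP s1 s2 : sorted ltn s1 -> sorted ltn s2 ->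
  size s1 = size s2 -> reflect (first_diff_in s1 s2) (lexlt s1 s2).
Proof.
move=> sorted1 sorted2 size12; apply: (iffP idP); first exact: lexlt_first_diff.
move=> diff12; have ne12 : s1 != s2.
  by apply/eqP=> e; case: diff12 => m []; rewrite e => ->.
case/orP: (lexlt_total ne12) => // lex21; case: (first_diff_in_asym diff12).
exact: lexlt_first_diff.
Qed.

Section SubsetOrder.
Variable t : nat.
Implicit Types A B : {set 'I_t}.

Lemma sorted_elems A : sorted ltn (elems A).
Proof.
rewrite ltn_sorted_uniq_leq sort_uniq sort_sorted ?andbT; last exact: leq_total.
by rewrite map_inj_uniq ?enum_uniq //; apply: val_inj.
Qed.

Lemma mem_elems A (i : 'I_t) : (val i \in elems A) = (i \in A).
Proof.
rewrite mem_sort; apply/mapP/idP => [[j]|iA]; last by exists i; rewrite ?mem_enum.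
by rewrite mem_enum => jA /val_inj ->.
Qed.

Lemma elems_lt A m : m \in elems A -> m < t.
Proof. by rewrite mem_sort => /mapP[j _ ->]; apply: ltn_ord. Qed.

Lemma size_elems A : size (elems A) = #|A|.
Proof. by rewrite size_sort size_map cardE. Qed.

Lemma elems_inj : injective (@elems t).
Proof. by move=> A B eqAB; apply/setP => i; rewrite -!mem_elems eqAB. Qed.

Lemma card_setC A : #|~: A| = t - #|A|.
Proof. by rewrite cardsCs setCK card_ord. Qed.

Lemma first_diff_in_elemsC A B :
  first_diff_in (elems A) (elems B) -> first_diff_in (elems (~: B)) (elems (~: A)).
Proof.
move=> [m [mA mB agree]]; have mt := elems_lt mA.
have memC (C : {set 'I_t}) x (xt : x < t) : (x \in elems (~: C)) = (x \notin elems C).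
  by rewrite (mem_elems _ (Ordinal xt)) (mem_elems _ (Ordinal xt)) inE.
exists m; rewrite !memC ?mA //; split=> // x xm.
by rewrite !memC ?agree // (ltn_trans xm mt).
Qed.

Lemma lexlt_elemsC A B : #|A| = #|B| ->
  lexlt (elems (~: A)) (elems (~: B)) = lexlt (elems B) (elems A).
Proof.
move=> cardAB; have cardC : #|~: A| = #|~: B| by rewrite !card_setC cardAB.
rewrite -!size_elems in cardAB cardC.
apply/(lexlt_first_diffP (sorted_elems _) (sorted_elems _) cardC)
     /(lexlt_first_diffP (sorted_elems _) (sorted_elems _) (esym cardAB)).
  by move/first_diff_in_elemsC; rewrite !setCK.
exact: first_diff_in_elemsC.
Qed.

Lemma subset_le_total : total (@subset_le t).
Proof.
move=> A B; rewrite /subset_le.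
case: (ltngtP #|A| #|B|) => //= _; rewrite -negb_and.
by apply/negP => /andP[/lexlt_trans lexBA /lexBA]; rewrite lexltnn.
Qed.

Lemma subset_le_trans : transitive (@subset_le t).
Proof.
move=> B A C; rewrite /subset_le.
case/orP=> [ltAB|/andP[/eqP eqAB nlexBA]]; case/orP=> [ltBC|/andP[/eqP eqBC nlexCB]].
- by rewrite (ltn_trans ltAB ltBC).
- by rewrite -eqBC ltAB.
- by rewrite eqAB ltBC.
rewrite eqAB eqBC eqxx ltnn /=; apply/negP => lexCA.
have [eqelemsAB|neAB] := eqVneq (elems A) (elems B).
  by rewrite -eqelemsAB lexCA in nlexCB.
case/orP: (lexlt_total neAB) => lex; last by rewrite lex in nlexBA.
by rewrite (lexlt_trans lexCA lex) in nlexCB.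
Qed.

Lemma subset_le_anti : antisymmetric (@subset_le t).
Proof.
move=> A B /andP[]; rewrite /subset_le.
case: (ltngtP #|A| #|B|) => //= _ nlexBA nlexAB.
apply: elems_inj; apply/eqP; apply: contraT => /lexlt_total.
by rewrite (negbTE nlexBA) (negbTE nlexAB).
Qed.

Lemma subset_le_setC A B : subset_le A B -> subset_le (~: B) (~: A).
Proof.
rewrite /subset_le !card_setC.
case/orP=> [ltAB|/andP[/eqP eqAB]]; last by rewrite eqAB eqxx ltnn lexlt_elemsC.
have cardBt : #|B| <= t by rewrite -[X in _ <= X]card_ord max_card.
by rewrite ltn_sub2l // (leq_trans ltAB).
Qed.

Lemma size_subsets_ordered : size (subsets_ordered t) = 2 ^ t.
Proof. by rewrite size_sort -cardE -powersetT card_powerset cardsT card_ord. Qed.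

Lemma subsets_ordered_setC : rev (map (@setC _) (subsets_ordered t)) = subsets_ordered t.
Proof.
apply: (sorted_eq subset_le_trans subset_le_anti).
- rewrite rev_sorted sorted_map.
  by apply: sub_sorted (sort_sorted subset_le_total _) => A B /subset_le_setC.
- exact: sort_sorted subset_le_total _.
apply: uniq_perm.
- by rewrite rev_uniq (map_inj_uniq (@setC_inj _)) sort_uniq enum_uniq.
- by rewrite sort_uniq enum_uniq.
move=> X; rewrite mem_rev mem_sort mem_enum inE; apply/mapP.
by exists (~: X); rewrite ?setCK // mem_sort mem_enum inE.
Qed.

Lemma kth_subset_rev (k : 'I_(2 ^ t)) : kth_subset t (rev_ord k) = ~: kth_subset t k.
Proof.
rewrite /kth_subset -{1}subsets_ordered_setC nth_rev; last first.
  by rewrite size_map size_subsets_ordered rev_ord_proof.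
rewrite size_map size_subsets_ordered /= subnSK // subKn 1?ltnW //.
by rewrite (nth_map set0) ?size_subsets_ordered.
Qed.

End SubsetOrder.

Section UpperClosure.
Variable t : nat.
Implicit Types (S X : {set 'I_t}) (C : {set {set 'I_t}}).

Lemma in_upclos1 X S : (S \in upclos [set X]) = (X \subset S).
Proof.
rewrite inE; apply/existsP/idP => [[Y /andP[/set1P -> //]]|sXS].
by exists X; rewrite set11.
Qed.

Lemma bigcap_upclos1 X : \bigcap_(a in X) upclos [set [set a]] = upclos [set X].
Proof.
apply/setP => S; rewrite in_upclos1; apply/bigcapP/subsetP => [sub a aX|sub a aX].
  by rewrite -sub1set -in_upclos1 sub.
by rewrite in_upclos1 sub1set sub.
Qed.

Lemma bigcap_setC_upclos1 C : \bigcap_(X in C) ~: upclos [set X] = ~: upclos C.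
Proof.
apply/setP => S; rewrite inE [S \in upclos C]inE.
apply/bigcapP/existsPn => [noX X|noX X XC].
  by apply/negP => /andP[XC sXS]; move: (noX X XC); rewrite inE in_upclos1 sXS.
by rewrite inE in_upclos1; move: (noX X); rewrite XC.
Qed.

Lemma upclos_blocker C : upclos (blocker C) = [set S | ~: S \notin upclos C].
Proof.
have meets_all S : (~: S \notin upclos C) = [forall X in C, S :&: X != set0].
  rewrite inE negb_exists; apply: eq_forallb => X.
  by rewrite negb_and subsets_disjoint setCK implybE setI_eq0 disjoint_sym.
apply/setP => S; rewrite [in RHS]inE meets_all inE; apply/existsP/forall_inP.
  move=> [Y /andP[]]; rewrite inE => /minsetP[/forall_inP meetY _] sYS X XC.
  by apply: contraNneq (meetY X XC); rewrite -!subset0 => <-; rewrite setSI.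
move=> meetS; have [Y minY sYS] :=
  minset_exists (P := fun Y => [forall X in C, Y :&: X != set0]) (introT forall_inP meetS).
by exists Y; rewrite inE minY sYS.
Qed.

End UpperClosure.

Local Open Scope ring_scope.

Section CharacteristicVectors.
Variables (R : nzRingType) (t : nat).
Implicit Types F : {set {set 'I_t}}.

Lemma gamma_setC F : gamma R (~: F) = Tplus R t - gamma R F.
Proof. by apply/rowP => k; rewrite !mxE inE; case: (_ \in F); rewrite ?subrr ?subr0. Qed.

Lemma Ubar_entry (i j : 'I_(2 ^ t)) : Ubar R t i j = (i == rev_ord j)%:R.
Proof.
rewrite mxE; congr (nat_of_bool _)%:R.
have ltj := ltn_ord j.
by apply/eqP/eqP => [sum_ij|->]; [apply: val_inj => /= |rewrite /=]; lia.
Qed.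

Lemma gamma_mulUbar F : gamma R F *m Ubar R t = gamma R [set S | ~: S \in F].
Proof.
apply/rowP => k; rewrite [LHS]mxE (bigD1 (rev_ord k)) //= big1 => [|j /negbTE neq].
  by rewrite Ubar_entry eqxx mulr1 addr0 !mxE inE kth_subset_rev.
by rewrite Ubar_entry neq mulr0.
Qed.

End CharacteristicVectors.

Section ComponentwiseProduct.
Variable R : comNzRingType.

Lemma eq_cprod n (I : finType) (P : {pred I}) (G H : I -> 'rV[R]_n) :
  (forall i, P i -> G i = H i) -> cprod P G = cprod P H.
Proof. by move=> eqGH; apply/rowP => k; rewrite !mxE; apply: eq_bigr => i /eqGH ->. Qed.

Lemma cprod_gamma t (I : finType) (P : {set I}) (G : I -> {set {set 'I_t}}) :
  cprod (mem P) (fun i => gamma R (G i)) = gamma R (\bigcap_(i in P) G i).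
Proof.
apply/rowP => k; rewrite !mxE; under eq_bigr => i _ do rewrite mxE.
set S := kth_subset t k.
case: (boolP [forall i in P, S \in G i]) => [/forall_inP inG|/forall_inPn[i iP notinG]].
  by rewrite (introT bigcapP inG); apply: big1 => i /inG ->.
have /negbTE -> : S \notin \bigcap_(i in P) G i by apply: contra notinG => /bigcapP->.
by rewrite (bigD1 i) //= (negbTE notinG) mul0r.
Qed.

End ComponentwiseProduct.

Section FieldOfCharacteristicNot2.
Variables (R : fieldType) (t : nat).
Hypothesis two_neq0 : 2%:R != 0 :> R.
Local Notation n := (2 ^ t)%N.
Local Notation M := (Mmat R t).

Lemma Mmat_rowB (i j : 'I_n) : val j = i.+1 -> row i M - row j M = 2%:R *: 'e_i.
Proof.
move=> ji; apply/rowP => k; rewrite !mxE eqxx /= ji ltnS.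
case: ltngtP => [ltki|ltik|/val_inj->]; rewrite -?val_eqE /=.
- by rewrite (ltn_eqF ltki) subrr mulr0.
- by rewrite (gtn_eqF ltik) subrr mulr0.
- by rewrite eqxx opprK mulr1.
Qed.

Lemma Mmat_row0D (i0 i : 'I_n) : val i0 = 0%N -> i.+1 = n ->
  row i0 M + row i M = 2%:R *: 'e_i.
Proof.
move=> i0_0 last_i; apply/rowP => k; rewrite !mxE eqxx /= i0_0 ltn0.
have [ltki|geki] := ltnP k i; first by rewrite -val_eqE (ltn_eqF ltki) subrr mulr0.
have /val_inj-> : val k = val i by apply/eqP; rewrite eqn_leq geki -ltnS last_i ltn_ord.
by rewrite eqxx mulr1.
Qed.

Lemma Mmat_unit : M \in unitmx.
Proof.
rewrite -row_full_unit -sub1mx; apply/row_subP => i; rewrite row1.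
have e_i_sub (u : 'rV[R]_n) : 'e_i = 2%:R^-1 *: u *m M -> (('e_i : 'rV_n) <= M)%MS.
  by move=> ->; apply: submxMl.
have [lt_in|ge_in] := ltnP i.+1 n.
  apply: (e_i_sub ('e_i - 'e_(Ordinal lt_in))).
  rewrite -scalemxAl mulmxBl -!rowE (Mmat_rowB (j := Ordinal lt_in)) //.
  by rewrite scalerA mulVf ?scale1r.
have last_i : i.+1 = n by apply/eqP; rewrite eqn_leq ltn_ord.
apply: (e_i_sub ('e_(Ordinal (leq_ltn_trans (leq0n i) (ltn_ord i))) + 'e_i)).
by rewrite -scalemxAl mulmxDl -!rowE Mmat_row0D // scalerA mulVf ?scale1r.
Qed.

Lemma mulmx_xvec (T : 'rV[R]_n) : xvec T *m M = T.
Proof. by rewrite -mulmxA mulVmx ?mulmx1 // Mmat_unit. Qed.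

Lemma half_Tplus_subtope (F : {set {set 'I_t}}) :
  2%:R^-1 *: (Tplus R t - tope R F) = gamma R F.
Proof. by rewrite opprB addrC subrK scalerA mulVf ?scale1r. Qed.

Lemma Pexpr_gamma (A : {set {set 'I_t}}) : Pexpr R A = gamma R (~: upclos A).
Proof.
rewrite /Pexpr -bigcap_setC_upclos1 -cprod_gamma; apply: eq_cprod => X _.
rewrite gamma_setC -bigcap_upclos1 -cprod_gamma; congr (_ - _); apply: eq_cprod => a _.
by rewrite mulmx_xvec half_Tplus_subtope.
Qed.

End FieldOfCharacteristicNot2.

Theorem corollary6p6 (R : numFieldType) (t : nat) (A : {set {set 'I_t}}) :
  (3 <= t)%N -> nontrivial_clutter A ->
  gamma R (upclos A) = Tplus R t - Pexpr R A /\
  gamma R (upclos (blocker A)) = Pexpr R A *m Ubar R t.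
Proof.
move=> _ _; have two_neq0 : 2%:R != 0 :> R by rewrite pnatr_eq0.
rewrite Pexpr_gamma // gamma_mulUbar gamma_setC subKr upclos_blocker; split=> //.
by congr gamma; apply/setP => S; rewrite !inE.
Qed.
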